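(* Let $k,p$ be positive integers, let $G$ be a multigraph, and let $A_1,\ldots,A_p$ be vertex sets contained in $p$ pairwise distinct equivalence classes of $\sim_k$ (with $A_i$ contained in the $i$-th class). Then there is an edge set $X\subseteq E(G)$ with $|X|\le (p-1)(k-1)$ such that for all distinct $i,j\in\{1,\ldots,p\}$ the multigraph $G-X$ contains no $A_i$--$A_j$-path.
   Context: For vertices $u,v$ of a multigraph $G$, $u\sim_k v$ means that either $u=v$ or there are $k$ pairwise edge-disjoint $u$--$v$-paths in $G$; this is an equivalence relation on $V(G)$. $G-X$ denotes $G$ with the edges of $X$ deleted. An $A$--$B$-path is a path with one endvertex in $A$, one in $B$, internally disjoint from $A\cup B$. *)

From mathcomp Require Import all_boot.
Set Implicit Arguments. Unset Strict Implicit. Unset Printing Implicit Defensive.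

(* Parallel edges are
   distinct elements of E; loops are allowed (they never lie on a path). *)
Section MG.
Variables (V E : finType) (ends : E -> V * V).

Definition joins (e : E) (x y : V) : bool :=
  (ends e == (x, y)) || (ends e == (y, x)).

Fixpoint walk (x : V) (s : seq (E * V)) : bool :=
  match s with
  | [::] => true
  | (e, y) :: s' => joins e x y && walk y s'
  end.

Definition is_path (x : V) (s : seq (E * V)) : bool :=
  walk x s && uniq (x :: map snd s).

Definition path_end (x : V) (s : seq (E * V)) : V := last x (map snd s).

Definition internal (s : seq (E * V)) : seq V := take (size s).-1 (map snd s).

Definition edge_disjoint_paths (k : nat) (u v : V) : Prop :=
  exists P : 'I_k -> seq (E * V),
    (forall i, is_path u (P i) /\ path_end u (P i) = v) /\
    (forall i j, i != j -> forall e, e \in map fst (P i) -> e \notin map fst (P j)).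

Definition simk (k : nat) (u v : V) : Prop := u = v \/ edge_disjoint_paths k u v.

Definition AB_path_avoiding (X : {set E}) (A B : {set V}) (x : V) (s : seq (E * V)) : Prop :=
  is_path x s /\ x \in A /\ path_end x s \in B /\
  (forall y, y \in internal s -> (y \notin A) && (y \notin B)) /\
  (forall e, e \in map fst s -> e \notin X).
End MG.

From mathcomp Require Import all_boot all_algebra zify.
Import GRing.Theory Num.Theory.
Set Implicit Arguments. Unset Strict Implicit. Unset Printing Implicit Defensive.

(* Induction on the number of classes.  Take representatives c_i, c_j of two
   different classes; since c_i and c_j are not k-edge-connected, the edge
   form of Menger's theorem gives a vertex set S with c_i in S, c_j outside
   and fewer than k boundary edges.  A ~_k class cannot be split by fewer than
   k edges, so every A_l lies on one side of S; recursing on both sides and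
   adding the boundary of S costs (p_1 - 1)(k - 1) + (p_2 - 1)(k - 1) + (k - 1)
   = (p - 1)(k - 1) edges.  Menger's theorem is obtained from integral
   max-flow/min-cut by augmenting paths followed by flow decomposition. *)

Section Multigraph.
Variables (V E : finType) (ends : E -> V * V).

Fixpoint all_steps (P : E -> V -> V -> bool) (x : V) (s : seq (E * V)) : bool :=
  match s with
  | [::] => true
  | (e, y) :: s' => P e x y && all_steps P y s'
  end.

Lemma walk_all_steps x s : walk ends x s = all_steps (joins ends) x s.
Proof. by elim: s x => [|[e y] s IH] x //=; rewrite IH. Qed.

Lemma sub_all_steps (P Q : E -> V -> V -> bool) x s :
  (forall e a b, P e a b -> Q e a b) -> all_steps P x s -> all_steps Q x s.
Proof.
move=> PQ; elim: s x => [|[e y] s IH] x //= /andP[Pe Ps].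
by rewrite PQ // IH.
Qed.

Lemma walk_edge_joins x s e : all_steps (joins ends) x s -> e \in map fst s ->
  exists a b, [/\ joins ends e a b, a \in x :: map snd s & b \in x :: map snd s].
Proof.
elim: s x => [|[e0 y] s IH] x //= /andP[J W]; rewrite in_cons => /orP[/eqP->|e_s].
  by exists x, y; rewrite !in_cons !eqxx orbT.
have [a [b [Jab a_s b_s]]] := IH _ W e_s.
by exists a, b; split; rewrite // in_cons ?a_s ?b_s orbT.
Qed.

Lemma path_uniq_edges x s : is_path ends x s -> uniq (map fst s).
Proof.
rewrite /is_path walk_all_steps => /andP[].
elim: s x => [|[e y] s IH] x //= /andP[J W] /andP[x_s Us].
rewrite (IH y W Us) andbT; apply/negP => e_s.
have [a [b [Jab a_s b_s]]] := walk_edge_joins W e_s.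
have /orP[/eqP xa|/eqP xb] : (x == a) || (x == b).
  move: J Jab; rewrite /joins.
  by case/orP=> /eqP-> /orP[]/eqP[<- <-]; rewrite eqxx ?orbT.
- by rewrite xa a_s in x_s.
- by rewrite xb b_s in x_s.
Qed.

Definition step_in (Q : E -> V -> V -> bool) (e : E) (a b : V) : bool :=
  [&& joins ends e a b, a != b & Q e a b].

Definition adj_in (Q : E -> V -> V -> bool) : rel V :=
  fun x y => [exists e, step_in Q e x y].

Lemma path_adj_steps Q x p : path (adj_in Q) x p ->
  exists s, map snd s = p /\ all_steps (step_in Q) x s.
Proof.
elim: p x => [|y p IH] x /=; first by exists [::].
case/andP=> /existsP[e He] /IH[s [<- Hs]].
by exists ((e, y) :: s); rewrite /= He Hs.
Qed.

Lemma connect_adj_path Q x y : connect (adj_in Q) x y ->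
  exists s, [/\ is_path ends x s, path_end x s = y & all_steps (step_in Q) x s].
Proof.
case/connectP=> p xp ->; case: (shortenP xp) => p' xp' Up' _.
have [s [s_p' Hs]] := path_adj_steps xp'.
exists s; split; rewrite /path_end ?s_p' //.
rewrite /is_path s_p' Up' andbT walk_all_steps.
by apply: sub_all_steps Hs => e a b /and3P[].
Qed.

Definition src (e : E) : V := (ends e).1.
Definition dst (e : E) : V := (ends e).2.

Definition boundary (S : {set V}) : {set E} :=
  [set e | (src e \in S) != (dst e \in S)].

Lemma joins_src_dst e : joins ends e (src e) (dst e).
Proof. by rewrite /joins /src /dst -surjective_pairing eqxx. Qed.

Lemma joins_dst_src e : joins ends e (dst e) (src e).
Proof. by rewrite /joins /src /dst -surjective_pairing eqxx orbT. Qed.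

Lemma joins_boundary (S : {set V}) e a b :
  joins ends e a b -> (a \in S) != (b \in S) -> e \in boundary S.
Proof. by rewrite /joins inE /src /dst => /orP[]/eqP->//=; rewrite eq_sym. Qed.

Lemma walk_crosses_boundary (S : {set V}) x s : walk ends x s ->
  (x \in S) != (path_end x s \in S) -> exists2 e, e \in map fst s & e \in boundary S.
Proof.
elim: s x => [|[e y] s IH] x /=; first by rewrite /path_end /= eqxx.
case/andP=> J W; rewrite /path_end /= => Hx.
have [xy|/negPn/eqP xy] := boolP ((x \in S) != (y \in S)).
  by exists e; rewrite ?in_cons ?eqxx ?(joins_boundary J xy).
have [e' e's e'S] : exists2 e', e' \in map fst s & e' \in boundary S.
  by apply: IH W _; rewrite -xy.
by exists e'; rewrite ?in_cons ?e's ?orbT.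
Qed.

Lemma simk_same_side k (S : {set V}) x y : simk ends k x y -> #|boundary S| < k ->
  (x \in S) = (y \in S).
Proof.
case=> [->//|[P [P_path P_disj]]] Sk; apply/eqP; apply: contraTT Sk => xyS.
rewrite -leqNgt.
have cross i : exists e, (e \in map fst (P i)) && (e \in boundary S).
  have [/andP[W _] P_end] := P_path i.
  have [|e e_P e_S] := walk_crosses_boundary (S := S) W; first by rewrite P_end.
  by exists e; rewrite e_P e_S.
pose g i := xchoose (cross i).
have g_spec i : (g i \in map fst (P i)) && (g i \in boundary S) := xchooseP (cross i).
have g_inj : injective g.
  move=> i j gij; apply/eqP; apply: contraT => ij.
  have /andP[gi _] := g_spec i; have /andP[gj _] := g_spec j.
  by have := P_disj _ _ ij _ gi; rewrite gij gj.
have g_sub : [set g i | i : 'I_k] \subset boundary S.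
  by apply/subsetP => e /imsetP[i _ ->]; have /andP[] := g_spec i.
by have := subset_leq_card g_sub; rewrite card_imset // card_ord.
Qed.

Lemma AB_path_avoiding_sub (X Y : {set E}) A1 A2 x s : {subset Y <= X} ->
  AB_path_avoiding ends X A1 A2 x s -> AB_path_avoiding ends Y A1 A2 x s.
Proof.
move=> YX [Px [xA1 [endA2 [Hint HX]]]]; do !split=> //.
by move=> e /HX; apply: contra; apply: YX.
Qed.

Section Flows.
Local Open Scope ring_scope.

(* Edges are oriented from [src] to [dst]; a flow [f] sends [f e] units
   along this orientation. *)
Definition orient (e : E) (x y : V) : int := if ends e == (x, y) then 1 else -1.
Definition incidence (e : E) (w : V) : int :=
  ((src e == w) : nat)%:Z - ((dst e == w) : nat)%:Z.
Definition excess (f : E -> int) (w : V) : int := \sum_e f e * incidence e w.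
Definition cut_incidence (e : E) (S : {set V}) : int :=
  ((src e \in S) : nat)%:Z - ((dst e \in S) : nat)%:Z.

Lemma orient_src_dst e : orient e (src e) (dst e) = 1.
Proof. by rewrite /orient /src /dst -surjective_pairing eqxx. Qed.

Lemma orient_dst_src e : src e != dst e -> orient e (dst e) (src e) = -1.
Proof.
move=> sd; rewrite /orient {1}(surjective_pairing (ends e)) xpair_eqE.
by rewrite -/(src e) -/(dst e) (negbTE sd).
Qed.

Lemma orient_sign e a b : orient e a b = 1 \/ orient e a b = -1.
Proof. by rewrite /orient; case: ifP; [left|right]. Qed.

Lemma sum_eq_mem a (S : {set V}) :
  \sum_(w in S) ((a == w) : nat)%:Z = ((a \in S) : nat)%:Z.
Proof.
have [aS|aS] := boolP (a \in S).
  rewrite (bigD1 a) //= eqxx big1 ?addr0 // => w /andP[_].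
  by rewrite eq_sym => /negbTE->.
by rewrite big1 // => w wS; case: eqP aS => // ->; rewrite wS.
Qed.

Lemma sum_mem_card (B : {set E}) : \sum_e ((e \in B) : nat)%:Z = #|B|%:Z.
Proof.
rewrite (eq_bigr (fun e => if e \in B then 1 else 0)); last by move=> e _; case: (e \in B).
by rewrite -big_mkcond sumr_const natz.
Qed.

Lemma sum_excess f (S : {set V}) :
  \sum_(w in S) excess f w = \sum_e f e * cut_incidence e S.
Proof.
rewrite /excess exchange_big /=; apply: eq_bigr => e _.
by rewrite -mulr_sumr sumrB !sum_eq_mem.
Qed.

Lemma excessD f g w : excess (fun e => f e + g e) w = excess f w + excess g w.
Proof. by rewrite /excess -big_split; apply: eq_bigr => e _; rewrite mulrDl. Qed.

Lemma excessB f g w : excess (fun e => f e - g e) w = excess f w - excess g w.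
Proof. by rewrite /excess -sumrB; apply: eq_bigr => e _; rewrite mulrBl. Qed.

Lemma excess0 w : excess (fun _ => 0) w = 0.
Proof. by rewrite /excess big1 // => e _; rewrite mul0r. Qed.

Definition unit_flow (e : E) (x y : V) : E -> int :=
  fun e' => if e' == e then orient e x y else 0.

Fixpoint path_flow (x : V) (s : seq (E * V)) : E -> int :=
  match s with
  | [::] => fun _ => 0
  | (e, y) :: s' => fun e' => unit_flow e x y e' + path_flow y s' e'
  end.

Lemma excess_unit_flow e x y w : joins ends e x y -> x != y ->
  excess (unit_flow e x y) w = ((x == w) : nat)%:Z - ((y == w) : nat)%:Z.
Proof.
move=> J xy; rewrite /excess (bigD1 e) //= big1 ?addr0; last first.
  by move=> e' /negbTE e'e; rewrite /unit_flow e'e mul0r.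
rewrite /unit_flow eqxx /orient /incidence /src /dst.
case/orP: J => /eqP->; first by rewrite eqxx mul1r.
rewrite xpair_eqE eq_sym (negbTE xy) /=.
by rewrite mulN1r opprB.
Qed.

Lemma excess_path_flow Q x s w : all_steps (step_in Q) x s ->
  excess (path_flow x s) w = ((x == w) : nat)%:Z - ((path_end x s == w) : nat)%:Z.
Proof.
elim: s x => [|[e y] s IH] x /=; first by rewrite excess0 /path_end subrr.
case/andP=> /and3P[J xy _] Hs.
by rewrite excessD excess_unit_flow // IH // /path_end /= addrA subrK.
Qed.

Lemma path_flow_notin x s e : e \notin map fst s -> path_flow x s e = 0.
Proof.
elim: s x => [|[e0 y] s IH] x //=; rewrite in_cons negb_or => /andP[ee0 e_s].
by rewrite /unit_flow (negbTE ee0) IH // add0r.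
Qed.

Lemma path_flow_in P x s e : uniq (map fst s) -> all_steps P x s -> e \in map fst s ->
  exists a b, P e a b /\ path_flow x s e = orient e a b.
Proof.
elim: s x => [|[e0 y] s IH] x //= /andP[e0_s Us] /andP[Pe Ps].
rewrite in_cons => /orP[/eqP ee0|e_s].
  by subst e0; exists x, y; rewrite /unit_flow eqxx path_flow_notin // addr0.
have ee0 : e != e0 by apply: contraNneq e0_s => <-.
have [a [b [Pab ->]]] := IH _ Us Ps e_s.
by exists a, b; rewrite /unit_flow (negbTE ee0) add0r.
Qed.

Variables u v : V.

Definition is_flow (f : E -> int) :=
  (forall e, -1 <= f e <= 1) /\ (forall w, w != u -> w != v -> excess f w = 0).

(* [residual f e a b]: [e] can take one more unit of flow from [a] to [b];
   [carries f e a b]: [f] sends a unit along [e] from [a] to [b]. *)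
Definition residual (f : E -> int) : E -> V -> V -> bool :=
  fun e a b => orient e a b * f e <= 0.
Definition carries (f : E -> int) : E -> V -> V -> bool :=
  fun e a b => 1 <= orient e a b * f e.

Lemma flow_value_cut f (S : {set V}) : is_flow f -> u \in S -> v \notin S ->
  excess f u = \sum_e f e * cut_incidence e S.
Proof.
case=> _ cons uS vS; rewrite -sum_excess (bigD1 u) //= big1 ?addr0 // => w /andP[wS wu].
by apply: cons => //; apply: contraNneq vS => <-.
Qed.

(* A boundary edge not saturated away from [S] would be a residual step out of [S]. *)
Lemma residual_closed_cut f (S : {set V}) : is_flow f ->
  (forall x y, x \in S -> adj_in (residual f) x y -> y \in S) ->
  forall e, f e * cut_incidence e S = ((e \in boundary S) : nat)%:Z.
Proof.
case=> cap _ closed e; rewrite /cut_incidence inE.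
have := cap e; case sS: (src e \in S); case dS: (dst e \in S) => //= fe;
  rewrite ?subrr ?mulr0 //.
- have sd : src e != dst e by apply: contraFneq dS => <-.
  have [fe0|] := lerP (f e) 0; last by lia.
  suff : dst e \in S by rewrite dS.
  apply: (closed (src e)) => //; apply/existsP; exists e.
  by rewrite /step_in joins_src_dst sd /residual orient_src_dst mul1r fe0.
- have sd : src e != dst e by apply: contraFneq sS => ->.
  have [fe0|] := lerP 0 (f e); last by lia.
  suff : src e \in S by rewrite sS.
  apply: (closed (dst e)) => //; apply/existsP; exists e.
  by rewrite /step_in joins_dst_src eq_sym sd /residual orient_dst_src // mulN1r oppr_le0.
Qed.

Lemma carries_closed_cut f (S : {set V}) : is_flow f ->
  (forall x y, x \in S -> adj_in (carries f) x y -> y \in S) ->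
  forall e, f e * cut_incidence e S <= 0.
Proof.
case=> cap _ closed e; rewrite /cut_incidence.
have := cap e; case sS: (src e \in S); case dS: (dst e \in S) => //= fe;
  rewrite ?subrr ?mulr0 //.
- have sd : src e != dst e by apply: contraFneq dS => <-.
  have [|fe0] := lerP (f e) 0; first by lia.
  suff : dst e \in S by rewrite dS.
  apply: (closed (src e)) => //; apply/existsP; exists e.
  rewrite /step_in joins_src_dst sd /carries orient_src_dst mul1r /=; lia.
- have sd : src e != dst e by apply: contraFneq sS => ->.
  have [|fe0] := lerP 0 (f e); first by lia.
  suff : src e \in S by rewrite sS.
  apply: (closed (dst e)) => //; apply/existsP; exists e.
  rewrite /step_in joins_dst_src eq_sym sd /carries orient_dst_src // mulN1r /=; lia.
Qed.

Definition reach_set (Q : E -> V -> V -> bool) : {set V} :=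
  [set w | connect (adj_in Q) u w].

Lemma reach_set_closed Q x y : x \in reach_set Q -> adj_in Q x y -> y \in reach_set Q.
Proof. by rewrite !inE => ux xy; apply: connect_trans ux (connect1 xy). Qed.

Lemma carries_path f : is_flow f -> 0 < excess f u ->
  exists s, [/\ is_path ends u s, path_end u s = v & all_steps (step_in (carries f)) u s].
Proof.
move=> Hf pos; have [uv|vS] := boolP (v \in reach_set (carries f)).
  by apply: connect_adj_path; rewrite inE in uv.
have uS : u \in reach_set (carries f) by rewrite inE connect0.
have : \sum_e f e * cut_incidence e (reach_set (carries f)) <= 0.
  rewrite -oppr_ge0 -sumrN; apply: sumr_ge0 => e _; rewrite oppr_ge0.
  by apply: (carries_closed_cut Hf) => x y; apply: reach_set_closed.
by rewrite -flow_value_cut //; lia.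
Qed.

Lemma flow_sub_path f s : is_flow f -> is_path ends u s -> path_end u s = v -> u != v ->
  all_steps (step_in (carries f)) u s ->
  [/\ is_flow (fun e => f e - path_flow u s e),
      excess (fun e => f e - path_flow u s e) u = excess f u - 1 &
      forall e, (e \in map fst s -> f e - path_flow u s e = 0 /\ f e != 0) /\
                (e \notin map fst s -> f e - path_flow u s e = f e)].
Proof.
move=> [cap cons] Ps s_end uv Cs.
have Us := path_uniq_edges Ps.
have excess_g w : excess (fun e => f e - path_flow u s e) w
    = excess f w - (((u == w) : nat)%:Z - ((v == w) : nat)%:Z).
  by rewrite excessB (excess_path_flow _ Cs) s_end.
have g_pt e : (e \in map fst s -> f e - path_flow u s e = 0 /\ f e != 0) /\
              (e \notin map fst s -> f e - path_flow u s e = f e).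
  split=> e_s; last by rewrite path_flow_notin // subr0.
  have [a [b [/and3P[_ _ Cab] ->]]] := path_flow_in Us Cs e_s.
  by move: Cab (cap e); rewrite /carries; case: (orient_sign e a b) => ->; lia.
split=> //; last by rewrite excess_g eqxx eq_sym (negbTE uv).
split=> [e|w wu wv].
  have [e_s|e_s] := boolP (e \in map fst s); first by rewrite ((g_pt e).1 e_s).1.
  by rewrite ((g_pt e).2 e_s).
by rewrite excess_g cons // eq_sym (negbTE wu) eq_sym (negbTE wv) /=; lia.
Qed.

Lemma flow_add_path f s : is_flow f -> is_path ends u s -> path_end u s = v -> u != v ->
  all_steps (step_in (residual f)) u s ->
  is_flow (fun e => f e + path_flow u s e) /\
  excess (fun e => f e + path_flow u s e) u = excess f u + 1.
Proof.
move=> [cap cons] Ps s_end uv Rs.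
have Us := path_uniq_edges Ps.
have excess_g w : excess (fun e => f e + path_flow u s e) w
    = excess f w + (((u == w) : nat)%:Z - ((v == w) : nat)%:Z).
  by rewrite excessD (excess_path_flow _ Rs) s_end.
split; last by rewrite excess_g eqxx eq_sym (negbTE uv).
split=> [e|w wu wv].
  have [e_s|e_s] := boolP (e \in map fst s); last first.
    by rewrite path_flow_notin // addr0; apply: cap.
  have [a [b [/and3P[_ _ Rab] ->]]] := path_flow_in Us Rs e_s.
  by move: Rab (cap e); rewrite /residual; case: (orient_sign e a b) => ->; lia.
by rewrite excess_g cons // eq_sym (negbTE wu) eq_sym (negbTE wv) /=; lia.
Qed.

Lemma excess_le_card f : is_flow f -> excess f u <= #|E|%:Z.
Proof.
case=> cap _; rewrite -natz -sumr_const /excess; apply: ler_sum => e _.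
by have := cap e; rewrite /incidence; case: (src e == u); case: (dst e == u) => /=; lia.
Qed.

Lemma residual_min_cut f : is_flow f -> ~~ connect (adj_in (residual f)) u v ->
  exists f (S : {set V}),
    [/\ is_flow f, u \in S, v \notin S & excess f u = #|boundary S|%:Z].
Proof.
move=> Hf uv; have uS : u \in reach_set (residual f) by rewrite inE connect0.
have vS : v \notin reach_set (residual f) by rewrite inE.
exists f, (reach_set (residual f)); split=> //.
rewrite (flow_value_cut Hf uS vS) -sum_mem_card; apply: eq_bigr => e _.
by apply: (residual_closed_cut Hf) => x y; apply: reach_set_closed.
Qed.

(* Each augmentation raises the value by one, and the value is at most [#|E|]. *)
Lemma max_flow_min_cut : u != v -> exists f (S : {set V}),
  [/\ is_flow f, u \in S, v \notin S & excess f u = #|boundary S|%:Z].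
Proof.
move=> uv.
have zero_flow : is_flow (fun _ => 0) by split=> [e|w _ _]; rewrite ?excess0.
suff /(_ #|E| _ zero_flow) : forall n f, is_flow f -> #|E|%:Z - excess f u <= n%:Z ->
    exists f (S : {set V}),
      [/\ is_flow f, u \in S, v \notin S & excess f u = #|boundary S|%:Z].
  by apply; rewrite excess0; lia.
elim=> [|n IH] f Hf Hn; have [|] := boolP (connect (adj_in (residual f)) u v);
  try exact: residual_min_cut; move=> /connect_adj_path[s [Ps s_end Rs]];
  have [Hg val_g] := flow_add_path Hf Ps s_end uv Rs.
- by have := excess_le_card Hg; rewrite val_g; lia.
- by apply: IH Hg _; rewrite val_g; lia.
Qed.

Lemma flow_decomposition : u != v -> forall (m : nat) f, is_flow f -> excess f u = m%:Z ->
  exists P : 'I_m -> seq (E * V),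
   [/\ (forall i, is_path ends u (P i) /\ path_end u (P i) = v),
       (forall i j, i != j -> forall e, e \in map fst (P i) -> e \notin map fst (P j)) &
       (forall i e, e \in map fst (P i) -> f e != 0)].
Proof.
move=> uv; elim=> [|m IH] f Hf val_f.
  by exists (fun _ => [::]); split=> -[].
have [s [Ps s_end Cs]] : exists s, [/\ is_path ends u s, path_end u s = v
    & all_steps (step_in (carries f)) u s] by apply: carries_path; rewrite ?val_f.
have [Hg val_g g_pt] := flow_sub_path Hf Ps s_end uv Cs.
have [|P [P_path P_disj P_supp]] := IH _ Hg; first by rewrite val_g val_f; lia.
have off_s i e : e \in map fst (P i) -> e \notin map fst s.
  move=> e_P; apply/negP => e_s.
  by have := P_supp _ _ e_P; rewrite ((g_pt e).1 e_s).1 eqxx.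
exists (fun i => if unlift ord_max i is Some j then P j else s); split.
- by move=> i; case: unliftP.
- move=> i j; case: (unliftP ord_max i) => [a ->|->];
    case: (unliftP ord_max j) => [b ->|->] ij e //.
  + by apply: P_disj; apply: contraNneq ij => ->.
  + exact: off_s.
  + by apply: contraL => /off_s.
  + by rewrite eqxx in ij.
- move=> i e; case: unliftP => [a _|_] e_P; last exact: ((g_pt e).1 e_P).2.
  by rewrite -((g_pt e).2 (off_s a e e_P)); apply: P_supp e_P.
Qed.

Lemma edge_menger (k : nat) : u != v -> ~ edge_disjoint_paths ends k u v ->
  exists S : {set V}, [/\ u \in S, v \notin S & (#|boundary S| < k)%N].
Proof.
move=> uv no_paths; have [f [S [Hf uS vS val_f]]] := max_flow_min_cut uv.
exists S; split=> //; rewrite ltnNge; apply/negP => kS; apply: no_paths.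
have [P [P_path P_disj _]] := flow_decomposition uv Hf val_f.
exists (fun i => P (widen_ord kS i)); split=> [i|i j ij]; first exact: P_path.
by apply: P_disj; apply: contra ij => /eqP/(congr1 val)/= ij; apply/eqP/val_inj.
Qed.

End Flows.

Section SeparatingClasses.
Variables (k p : nat) (A : 'I_p -> {set V}) (c : 'I_p -> V).
Hypothesis hc : forall i j : 'I_p, i != j -> ~ simk ends k (c i) (c j).
Hypothesis hA : forall (i : 'I_p) (x : V), x \in A i -> simk ends k x (c i).

Lemma avoiding_path_same_side (S : {set V}) i j x s : #|boundary S| < k ->
  AB_path_avoiding ends (boundary S) (A i) (A j) x s -> (c i \in S) = (c j \in S).
Proof.
move=> Sk [/andP[W _] [xA [endA [_ avoid]]]].
rewrite -(simk_same_side (hA xA) Sk) -(simk_same_side (hA endA) Sk).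
apply/eqP; apply: contraT => cross; have [e e_s eS] := walk_crosses_boundary W cross.
by have := avoid e e_s; rewrite eS.
Qed.

Lemma separate_classes (I : {set 'I_p}) : exists X : {set E},
  #|X| <= (#|I| - 1) * (k - 1) /\
  forall i j, i \in I -> j \in I -> i != j ->
    ~ exists x s, AB_path_avoiding ends X (A i) (A j) x s.
Proof.
have [n] := ubnP #|I|; elim: n I => // n IH I In.
have [/card_le1_eqP I1|/card_gt1P[i [j [iI jI ij]]]] := leqP #|I| 1.
  by exists set0; split=> [|i j iI jI]; rewrite ?cards0 // (I1 i j iI jI) eqxx.
have cij : c i != c j by apply/eqP => cij; apply: (hc ij); left.
have [S [ciS cjS Sk]] : exists S : {set V}, [/\ c i \in S, c j \notin S & #|boundary S| < k].
  by apply: edge_menger cij _ => paths; apply: (hc ij); right.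
pose T : {set 'I_p} := [set l | c l \in S].
have iI1 : i \in I :&: T by rewrite !inE iI ciS.
have jI2 : j \in I :\: T by rewrite !inE jI cjS.
have card_split := cardsID T I.
have pos1 : 0 < #|I :&: T| by apply/card_gt0P; exists i.
have pos2 : 0 < #|I :\: T| by apply/card_gt0P; exists j.
have lt1 : #|I :&: T| < #|I| by rewrite -card_split -[X in X < _]addn0 ltn_add2l.
have lt2 : #|I :\: T| < #|I| by rewrite -card_split -[X in X < _]add0n ltn_add2r.
have [X1 [card1 sep1]] := IH _ (leq_trans lt1 In).
have [X2 [card2 sep2]] := IH _ (leq_trans lt2 In).
exists (boundary S :|: X1 :|: X2); split.
  have := cardsUI (boundary S) X1; have := cardsUI (boundary S :|: X1) X2; nia.
move=> i' j' i'I j'I i'j' [x [s Ps]].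
have same : (c i' \in S) = (c j' \in S).
  apply: (avoiding_path_same_side Sk); apply: AB_path_avoiding_sub Ps.
  by move=> e eS; rewrite !in_setU eS.
have [ci'S|ci'S] := boolP (c i' \in S).
- apply: (sep1 i' j') => //; rewrite ?inE ?i'I ?j'I -?same //.
  by exists x, s; apply: AB_path_avoiding_sub Ps => e eX; rewrite !in_setU eX orbT.
- apply: (sep2 i' j') => //; rewrite ?inE ?i'I ?j'I -?same ?ci'S //.
  by exists x, s; apply: AB_path_avoiding_sub Ps => e eX; rewrite !in_setU eX orbT.
Qed.

End SeparatingClasses.
End Multigraph.

Theorem lemma10 (V E : finType) (ends : E -> V * V) (k p : nat)
  (hk : 0 < k) (hp : 0 < p)
  (A : 'I_p -> {set V}) (c : 'I_p -> V)
  (hc : forall i j : 'I_p, i != j -> ~ simk ends k (c i) (c j))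
  (hA : forall (i : 'I_p) (x : V), x \in A i -> simk ends k x (c i)) :
  exists X : {set E},
    #|X| <= (p - 1) * (k - 1) /\
    (forall i j : 'I_p, i != j ->
       ~ exists (x : V) (s : seq (E * V)), AB_path_avoiding ends X (A i) (A j) x s).
Proof.
have [X [card_X sep_X]] := separate_classes hc hA [set: 'I_p].
rewrite cardsT card_ord in card_X.
by exists X; split=> // i j; apply: sep_X; rewrite inE.
Qed.
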